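(* Let $\theta$ be a perfect symmetric paperfolding morphism on $\{a,b,c,d\}$ and let $\mathcal{L}_\theta$ be the language generated by $\theta$. Then ${\rm S}^\oplus(\mathcal{L}_\theta)=\mathbb{Z}\times\mathbb{Z}$.
   Context: Let ${\rm S}^\oplus$ be the homomorphism from words over $\{a,b,c,d\}$ to $\mathbb{Z}\times\mathbb{Z}$ given by ${\rm S}^\oplus(a)=(1,0)$, ${\rm S}^\oplus(b)=(0,1)$, ${\rm S}^\oplus(c)=(-1,0)$, ${\rm S}^\oplus(d)=(0,-1)$ and ${\rm S}^\oplus(w_1\cdots w_n)=\sum_i{\rm S}^\oplus(w_i)$. The language $\mathcal{L}_\theta$ generated by a morphism $\theta$ is the set of all nonempty finite words occurring as factors of $\theta^n(x)$ for some $n\ge0$ and some letter $x$. Let $\sigma$ be the rotation morphism $\sigma(a)=b$, $\sigma(b)=c$, $\sigma(c)=d$, $\sigma(d)=a$, and $\tau$ the reversal anti-morphism $\tau(w_1\cdots w_n)=w_n\cdots w_1$. A morphism $\theta$ on $\{a,b,c,d\}$ is a paperfolding morphism if (1) $\sigma\tau\theta=\theta$ and (2) in the word $\theta(a)$ letters from $\{a,c\}$ alternate with letters from $\{b,d\}$. It is symmetric if $\sigma\theta=\theta\sigma$ (equivalently, $\theta(a)$ is a palindrome). An infinite word $x=x_0x_1\cdots$ generates the walk $Z_0=(0,0)$, $Z_{n+1}=Z_n+{\rm S}^\oplus(x_n)$. A paperfolding morphism $\theta$ with $\theta(a)$ beginning with $a$ (and $|\theta(a)|\ge2$) is perfect if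 the four walks generated by the fixed point $x=\theta^\infty(a)$ and its rotations $\sigma(x),\sigma^2(x),\sigma^3(x)$ together visit every point of $\mathbb{Z}\times\mathbb{Z}$ other than the origin exactly twice, and the origin exactly four times. (Example: $\theta(a)=abcba$, $\theta(b)=bcdcb$, $\theta(c)=cdadc$, $\theta(d)=dabad$.) *)

From mathcomp Require Import all_boot all_order all_algebra.
Set Implicit Arguments. Unset Strict Implicit. Unset Printing Implicit Defensive.
Import GRing.Theory Num.Theory.

Inductive letter := A | B | C | D.

Definition sigma (l : letter) : letter :=
  match l with A => B | B => C | C => D | D => A end.

Definition morph := letter -> seq letter.

Definition applyw (th : morph) (w : seq letter) : seq letter :=
  flatten (map th w).

Definition iterw (th : morph) (n : nat) (w : seq letter) : seq letter :=
  iter n (applyw th) w.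

Definition Svec (l : letter) : int * int :=
  match l with
  | A => (Posz 1, Posz 0) | B => (Posz 0, Posz 1)
  | C => (Negz 0, Posz 0) | D => (Posz 0, Negz 0)
  end.

Definition Sw (w : seq letter) : int * int :=
  foldr (fun l acc => ((Svec l).1 + acc.1, (Svec l).2 + acc.2)%R) (Posz 0, Posz 0) w.

Definition in_lang (th : morph) (w : seq letter) : Prop :=
  w <> [::] /\
  exists (n : nat) (x : letter) (u v : seq letter), iterw th n [:: x] = u ++ w ++ v.

Definition isAC (l : letter) : bool := match l with A | C => true | _ => false end.

(* paperfolding morphism:
   (1) sigma tau theta = theta sigma (on letters: theta(sigma x) = sigma(rev(theta x)))
   (2) in theta(a), letters from {a,c} alternate with letters from {b,d} *)
Definition paperfolding (th : morph) : Prop :=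
  (forall x : letter, th (sigma x) = map sigma (rev (th x))) /\
  (forall i : nat, i.+1 < size (th A) ->
     isAC (nth A (th A) i) != isAC (nth A (th A) i.+1)).

Definition symmetric_pf (th : morph) : Prop :=
  forall x : letter, map sigma (th x) = th (sigma x).

(* the fixed point theta^infty(a): its k-th letter is the k-th letter of
   theta^(k+1)(a) (well defined when theta(a) = a u, u nonempty, and all images
   are nonempty, which holds for paperfolding morphisms) *)
Definition fixpt (th : morph) (k : nat) : letter :=
  nth A (iterw th k.+1 [:: A]) k.

Definition walk (th : morph) (j n : nat) : int * int :=
  Sw (map (iter j sigma) (mkseq (fixpt th) n)).

(* perfect paperfolding morphism: theta(a) begins with a, |theta(a)| >= 2, and
   the four walks together visit each point other than the origin exactly twice
   and the origin exactly four times (visits counted as pairs (walk index, time)) *)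
Definition perfect (th : morph) : Prop :=
  paperfolding th /\
  (exists u : seq letter, th A = A :: u /\ u <> [::]) /\
  (forall p : int * int,
     exists s : seq (nat * nat),
       uniq s /\ size s = (if p == (Posz 0, Posz 0) then 4 else 2) /\
       forall j n : nat, (j < 4 /\ walk th j n = p) <-> (j, n) \in s).

From HB Require Import structures.
From mathcomp Require Import all_boot all_order all_algebra.
From mathcomp Require Import zify.
From Stdlib Require Import Classical.
Set Implicit Arguments. Unset Strict Implicit. Unset Printing Implicit Defensive.
Import GRing.Theory Num.Theory.
Local Open Scope ring_scope.

(* For p <> 0, perfectness gives a rotated walk sigma^j(x) through p at some
   time n, and its prefix of length n is a factor of theta^n(sigma^j a).
   For p = 0, suppose no nonempty factor sums to 0.  Then the walk Z of the
   fixed point is injective, and no Z_t is a quarter turn of some Z_v: since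
   theta^(K+1)(a) = theta^K(a) sigma^e(theta^K(a)) ... with e in {1, 3} and
   theta^K(a) a palindrome, Z_t + rot^e(Z_v) is the sum of a factor.
   Perfectness at (1, 0) then forces Z_n = (-1, 0) for some n, so that
   Z_0 ... Z_n is a closed lattice walk.  Its winding numbers around
   (1/2, -1/2) and (1/2, 3/2) differ by one, so one of the walks rot(Z), rot^3(Z)
   starts at a lattice point of nonzero winding number.  That walk is injective
   and never meets Z, so its winding number stays nonzero and it is trapped in
   a bounded box, which is absurd. *)

Local Notation point := (int * int)%type.

Definition rot90 (p : point) : point := (- p.2, p.1).

Lemma rot90D p q : rot90 (p + q) = rot90 p + rot90 q.
Proof. by rewrite /rot90 /= opprD. Qed.

Lemma rot90K p : rot90 (rot90 p) = - p.
Proof. by []. Qed.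

Lemma iter_rot90_0 j : iter j rot90 0 = 0.
Proof. by elim: j => //= j ->. Qed.

Lemma iter_rot90D j p q : iter j rot90 (p + q) = iter j rot90 p + iter j rot90 q.
Proof. by elim: j => //= j ->; rewrite rot90D. Qed.

Lemma rot90_inj : injective rot90.
Proof. by move=> p q e; apply: oppr_inj; rewrite -!rot90K e. Qed.

Lemma iter_rot90_inj j : injective (iter j rot90).
Proof. by elim: j => //= j IH p q /rot90_inj /IH. Qed.

Lemma Svec_sigma l : Svec (sigma l) = rot90 (Svec l).
Proof. by case: l. Qed.

Lemma iter_rot90_Svec j l : iter j rot90 (Svec l) = Svec (iter j sigma l).
Proof. by elim: j => //= j ->; rewrite Svec_sigma. Qed.

Lemma SwE w : Sw w = \sum_(l <- w) Svec l.
Proof. by elim: w => [|l w IH]; rewrite ?big_nil ?big_cons //= -IH. Qed.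

Lemma Sw_cat u v : Sw (u ++ v) = Sw u + Sw v.
Proof. by rewrite !SwE big_cat. Qed.

Lemma Sw_rev w : Sw (rev w) = Sw w.
Proof. by rewrite !SwE big_rev. Qed.

Lemma Sw_map_iter_sigma j w : Sw (map (iter j sigma) w) = iter j rot90 (Sw w).
Proof.
rewrite !SwE big_map (big_morph _ (iter_rot90D j) (iter_rot90_0 j)).
by apply: eq_bigr => l _; rewrite iter_rot90_Svec.
Qed.

Definition adjacent (a b : point) : Prop := exists l, b = a + Svec l.

Definition closed_walk (P : nat -> point) (s : nat) : Prop :=
  (forall k, (k < s)%N -> adjacent (P k) (P k.+1)) /\ adjacent (P s) (P 0%N).

(* [hcross q a b] (resp. [vcross q a b]) is the signed number of crossings of
   the edge [a, b] with the upward (resp. leftward) ray from q + (1/2, 1/2);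
   along a closed walk both add up to its winding number around that point,
   the indicator [quadrant q] of the region between the two rays making the
   difference telescope. *)
Definition quadrant (q a : point) : int :=
  if (a.1 <= q.1) && (q.2 < a.2) then 1 else 0.

Definition hcross (q a b : point) : int :=
  if (a.2 == b.2) && (q.2 < a.2) then
    if (a.1 == q.1) && (b.1 == q.1 + 1) then 1
    else if (b.1 == q.1) && (a.1 == q.1 + 1) then -1 else 0
  else 0.

Definition vcross (q a b : point) : int :=
  if (a.1 == b.1) && (a.1 <= q.1) then
    if (a.2 == q.2) && (b.2 == q.2 + 1) then 1
    else if (b.2 == q.2) && (a.2 == q.2 + 1) then -1 else 0
  else 0.

Ltac case_ifs := repeat (case: ifP => /= ?); lia.

Lemma quadrant_adjacent q a b : adjacent a b ->
  quadrant q b - quadrant q a = vcross q a b - hcross q a b.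
Proof.
case: q a => [q1 q2] [a1 a2] [l ->].
by case: l; rewrite /quadrant /vcross /hcross /=; case_ifs.
Qed.

Lemma hcross_up q a b : adjacent a b -> a != q + (0, 1) -> b != q + (0, 1) ->
  hcross q a b = hcross (q + (0, 1)) a b.
Proof.
case: q a => [q1 q2] [a1 a2] [l ->].
by case: l; rewrite /hcross /= !xpair_eqE; case_ifs.
Qed.

Lemma vcross_right q a b : adjacent a b -> a != q + (1, 0) -> b != q + (1, 0) ->
  vcross q a b = vcross (q + (1, 0)) a b.
Proof.
case: q a => [q1 q2] [a1 a2] [l ->].
by case: l; rewrite /vcross /= !xpair_eqE; case_ifs.
Qed.

Lemma hcross_off q a b : a.1 != q.1 -> b.1 != q.1 -> hcross q a b = 0.
Proof. by rewrite /hcross; case_ifs. Qed.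

Lemma vcross_off q a b : a.2 != q.2 -> b.2 != q.2 -> vcross q a b = 0.
Proof. by rewrite /vcross; case_ifs. Qed.

Lemma hcross_origin a b : adjacent a b -> a != 0 -> b != 0 -> a != (0, 1) -> b != (0, 1) ->
  hcross (0, -1) a b = hcross (0, 1) a b.
Proof.
case: a => [a1 a2] [l ->].
by case: l; rewrite /hcross /= !xpair_eqE; case_ifs.
Qed.

Definition edge_sum (f : point -> point -> int) (P : nat -> point) (s : nat) : int :=
  \sum_(0 <= k < s) f (P k) (P k.+1) + f (P s) (P 0%N).

Definition winding (P : nat -> point) (s : nat) (q : point) : int :=
  edge_sum (hcross q) P s.

Definition walk_box (P : nat -> point) (s : nat) : seq point :=
  [seq (x, y) | x <- [seq (P k).1 | k <- iota 0 s.+1],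
                y <- [seq (P k).2 | k <- iota 0 s.+1]].

Lemma nat_injective_not_bounded (T : eqType) (W : nat -> T) (F : seq T) :
  injective W -> ~ (forall t, W t \in F).
Proof.
move=> W_inj W_F.
have : (size (map W (iota 0 (size F).+1)) <= size F)%N.
  apply: uniq_leq_size; first by rewrite map_inj_uniq ?iota_uniq.
  by move=> _ /mapP[t _ ->].
by rewrite size_map size_iota ltnn.
Qed.

Section ClosedWalk.

Variables (P : nat -> point) (s : nat).
Hypothesis P_closed : closed_walk P s.

Lemma eq_edge_sum (Q : pred point) f g :
  (forall k, (k <= s)%N -> ~~ Q (P k)) ->
  (forall a b, adjacent a b -> ~~ Q a -> ~~ Q b -> f a b = g a b) ->
  edge_sum f P s = edge_sum g P s.
Proof.
case: P_closed => steps last_step offQ fg; rewrite /edge_sum.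
congr (_ + _); last by apply: fg; rewrite ?offQ.
apply: eq_big_nat => k /andP[_ lt_ks].
by apply: fg; rewrite ?offQ //; [apply: steps | apply: ltnW].
Qed.

Lemma winding_vcross q : winding P s q = edge_sum (vcross q) P s.
Proof.
case: P_closed => steps last_step; apply/eqP; rewrite -subr_eq0; apply/eqP.
rewrite /winding /edge_sum opprD addrACA -sumrB.
rewrite (telescope_sumr_eq (fun k => - quadrant q (P k))) //.
  by move: (quadrant_adjacent q last_step); lia.
move=> k /andP[_ lt_ks].
by move: (quadrant_adjacent q (steps k lt_ks)); lia.
Qed.

Lemma winding_up q : (forall k, (k <= s)%N -> P k != q + (0, 1)) ->
  winding P s q = winding P s (q + (0, 1)).
Proof.
move=> off; rewrite /winding.
by apply: (eq_edge_sum (Q := pred1 (q + (0, 1)))) => // a b; apply: hcross_up.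
Qed.

Lemma winding_right q : (forall k, (k <= s)%N -> P k != q + (1, 0)) ->
  winding P s q = winding P s (q + (1, 0)).
Proof.
move=> off; rewrite !winding_vcross.
by apply: (eq_edge_sum (Q := pred1 (q + (1, 0)))) => // a b; apply: vcross_right.
Qed.

Lemma winding_adjacent a b : adjacent a b ->
  (forall k, (k <= s)%N -> P k != a) -> (forall k, (k <= s)%N -> P k != b) ->
  winding P s a = winding P s b.
Proof.
move=> [l ->] off_a; case: l => off_b.
- by apply: winding_right.
- by apply: winding_up.
- have a_eq : a = a + Svec C + (1, 0) by rewrite -addrA addr0.
  by rewrite {1}a_eq -winding_right // -a_eq.
- have a_eq : a = a + Svec D + (0, 1) by rewrite -addrA addr0.
  by rewrite {1}a_eq -winding_up // -a_eq.
Qed.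

Lemma winding_neq0_box q : winding P s q != 0 -> q \in walk_box P s.
Proof.
move=> wq; rewrite [q]surjective_pairing; apply: allpairs_f.
- apply: contraNT wq => q1_off; apply/eqP.
  rewrite /winding (eq_edge_sum (Q := [pred a | a.1 == q.1]) (g := fun _ _ => 0)).
  + by rewrite /edge_sum big1 ?add0r.
  + move=> k le_ks; apply: contra q1_off => /eqP <-.
    by apply: (map_f (fun k => (P k).1)); rewrite mem_iota; lia.
  + by move=> a b _; apply: hcross_off.
- apply: contraNT wq => q2_off; apply/eqP.
  rewrite winding_vcross (eq_edge_sum (Q := [pred a | a.2 == q.2]) (g := fun _ _ => 0)).
  + by rewrite /edge_sum big1 ?add0r.
  + move=> k le_ks; apply: contra q2_off => /eqP <-.
    by apply: (map_f (fun k => (P k).2)); rewrite mem_iota; lia.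
  + by move=> a b _; apply: vcross_off.
Qed.

Lemma winding_escape (W : nat -> point) :
  (forall t, adjacent (W t) (W t.+1)) -> injective W ->
  (forall t k, (k <= s)%N -> P k != W t) -> winding P s (W 0%N) = 0.
Proof.
move=> W_steps W_inj off; apply/eqP/contraT => w0.
have wt t : winding P s (W t) = winding P s (W 0%N).
  by elim: t => // t <-; symmetry; apply: winding_adjacent => // k; apply: off.
case: (nat_injective_not_bounded (F := walk_box P s) W_inj) => t.
by apply: winding_neq0_box; rewrite wt.
Qed.

Lemma winding_origin : P 0%N = 0 -> P 1%N = (1, 0) -> P s = (-1, 0) ->
  (forall k, (0 < k <= s)%N -> P k != 0 /\ P k != (0, 1)) ->
  winding P s (0, -1) = winding P s (0, 1) + 1.
Proof.
(* Of all edges of the walk, only [0, (1, 0)] crosses the segment from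
   (1/2, -1/2) to (1/2, 3/2). *)
case: P_closed => steps _ P0 P1 Ps off.
have s_gt0 : (0 < s)%N.
  by rewrite lt0n; apply/negP => /eqP s0; move: Ps; rewrite s0 P0 => /(congr1 fst) /=.
rewrite /winding /edge_sum (big_ltn s_gt0) (big_ltn s_gt0) P0 P1 Ps.
have -> : \sum_(1 <= k < s) hcross (0, -1) (P k) (P k.+1) =
          \sum_(1 <= k < s) hcross (0, 1) (P k) (P k.+1).
  apply: eq_big_nat => k /andP[k_gt0 k_lt_s].
  have [Pk0 Pk01] : P k != 0 /\ P k != (0, 1) by apply: off; lia.
  have [Pk0' Pk01'] : P k.+1 != 0 /\ P k.+1 != (0, 1) by apply: off; lia.
  by apply: hcross_origin => //; apply: steps.
have -> : hcross (0, -1) 0 (1, 0) = 1 by rewrite /hcross /=.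
have -> : hcross (0, 1) 0 (1, 0) = 0 by rewrite /hcross /=.
have -> : hcross (0, -1) (-1, 0) 0 = 0 by rewrite /hcross /=.
have -> : hcross (0, 1) (-1, 0) 0 = 0 by rewrite /hcross /=.
by rewrite add0r !addr0 addrC.
Qed.

End ClosedWalk.

Definition nat_of_letter (l : letter) : nat :=
  match l with A => 0 | B => 1 | C => 2 | D => 3 end.

Definition letter_of_nat (n : nat) : letter :=
  match n with 0 => A | 1 => B | 2 => C | _ => D end.

Lemma nat_of_letterK : cancel nat_of_letter letter_of_nat.
Proof. by case. Qed.

HB.instance Definition _ := Equality.copy letter (can_type nat_of_letterK).

Lemma applyw_cat th u v : applyw th (u ++ v) = applyw th u ++ applyw th v.
Proof. by rewrite /applyw map_cat flatten_cat. Qed.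

Lemma iterwS th n w : iterw th n.+1 w = applyw th (iterw th n w).
Proof. by []. Qed.

Lemma iterwSr th n w : iterw th n.+1 w = iterw th n (applyw th w).
Proof. exact: iterSr. Qed.

Lemma iterw_cat th n u v : iterw th n (u ++ v) = iterw th n u ++ iterw th n v.
Proof. by elim: n => // n IH; rewrite !iterwS IH applyw_cat. Qed.

Lemma iterw_map th f : (forall x, th (f x) = map f (th x)) ->
  forall n w, iterw th n (map f w) = map f (iterw th n w).
Proof.
move=> thf; elim=> // n IH w; rewrite !iterwS IH /applyw map_flatten -!map_comp.
by congr flatten; apply: eq_map.
Qed.

Lemma symmetric_iter_sigma th : symmetric_pf th ->
  forall j x, th (iter j sigma x) = map (iter j sigma) (th x).
Proof.
move=> sym; elim=> [|j IH] x /=; first by rewrite map_id.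
by rewrite -sym IH -map_comp.
Qed.

Lemma sigma_inj : injective sigma.
Proof. by do 2 case. Qed.

Lemma paperfolding_symmetric_rev th : paperfolding th -> symmetric_pf th ->
  forall x, rev (th x) = th x.
Proof. by move=> [pf _] sym x; apply: (inj_map sigma_inj); rewrite sym pf. Qed.

Lemma iterw_rev th : (forall x, rev (th x) = th x) ->
  forall n w, iterw th n (rev w) = rev (iterw th n w).
Proof.
move=> th_rev; elim=> // n IH w; rewrite !iterwS IH /applyw map_rev rev_flatten -map_comp.
by congr (flatten (rev _)); apply: eq_map => x; rewrite /= th_rev.
Qed.

Lemma size_image th : paperfolding th -> forall x, size (th x) = size (th A).
Proof.
move=> [pf _] x; have size_sigma y : size (th (sigma y)) = size (th y).
  by rewrite pf size_map size_rev.
case: x => //; first by rewrite -[B]/(sigma A) size_sigma.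
  by rewrite -[C]/(sigma (sigma A)) !size_sigma.
by rewrite -[D]/(sigma (sigma (sigma A))) !size_sigma.
Qed.

Definition iterA (th : morph) (n : nat) : seq letter := iterw th n [:: A].

Lemma size_iterA th : paperfolding th -> forall n, size (iterA th n) = (size (th A) ^ n)%N.
Proof.
move=> pf; elim=> // n IH; rewrite /iterA iterwS -/(iterA th n) expnSr -IH.
elim: (iterA th n) => // x w IHw.
by rewrite /applyw /= size_cat -/(applyw th w) IHw size_image // mulSn.
Qed.

Definition fixwalk (th : morph) (t : nat) : point := Sw (mkseq (fixpt th) t).

Lemma walk_fixwalk th j n : walk th j n = iter j rot90 (fixwalk th n).
Proof. exact: Sw_map_iter_sigma. Qed.

Lemma fixwalk0 th : fixwalk th 0 = 0.
Proof. by []. Qed.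

Lemma fixwalkS th t : fixwalk th t.+1 = fixwalk th t + Svec (fixpt th t).
Proof. by rewrite /fixwalk mkseqS -cats1 Sw_cat [Sw [:: _]]SwE big_seq1. Qed.

Lemma fixwalk_closed th n : fixwalk th n = (-1, 0) -> closed_walk (fixwalk th) n.
Proof.
move=> Zn; split=> [k _|]; first by exists (fixpt th k); rewrite fixwalkS.
by exists A; rewrite Zn -[(-1, 0)]/(- Svec A) addNr.
Qed.

Lemma in_lang_infix th n x w :
  (0 < size w)%N -> infix w (iterw th n [:: x]) -> in_lang th w.
Proof. by case: w => // l w _ /infixP[u [v E]]; split=> //; exists n, x, u, v. Qed.

Lemma infix_drop_take (T : eqType) n m (s1 s2 : seq T) :
  infix (drop n s1 ++ take m s2) (s1 ++ s2).
Proof.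
apply/infixP; exists (take n s1), (drop m s2).
by rewrite -catA catA !cat_take_drop.
Qed.

Lemma exists_neq_uniq (T : eqType) (x : T) (s : seq T) :
  uniq s -> (1 < size s)%N -> exists2 y, y \in s & y != x.
Proof.
move=> s_uniq.
case/boolP: (all (pred1 x) s) => [/allP all_x | /allPn[y y_s y_x]]; last by exists y.
suff : (size s <= size [:: x])%N by move=> /leq_ltn_trans le /le; rewrite ltnn.
by apply: uniq_leq_size => // y /all_x; rewrite inE.
Qed.

Section FixedPoint.

Variables (th : morph) (e : nat) (rest : seq letter).
Hypothesis th_pf : paperfolding th.
Hypothesis th_sym : symmetric_pf th.
Hypothesis thA : th A = [:: A, iter e sigma A & rest].

Lemma iterA_S n :
  iterA th n.+1 = iterA th n ++ map (iter e sigma) (iterA th n) ++ iterw th n rest.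
Proof.
rewrite /iterA iterwSr /applyw /= cats0 thA.
rewrite -[[:: A, _ & _]]/([:: A] ++ map (iter e sigma) [:: A] ++ rest).
by rewrite !iterw_cat iterw_map //; apply: symmetric_iter_sigma.
Qed.

Lemma prefix_iterA m n : (m <= n)%N -> prefix (iterA th m) (iterA th n).
Proof.
elim: n => [|n IH]; first by rewrite leqn0 => /eqP ->; apply: prefix_refl.
rewrite leq_eqVlt => /orP[/eqP -> | /IH m_pre]; first exact: prefix_refl.
by apply: prefix_trans m_pre _; rewrite iterA_S prefix_prefix.
Qed.

Lemma size_iterA_gt n : (n < size (iterA th n))%N.
Proof. by rewrite size_iterA // thA ltn_expl. Qed.

Lemma rev_iterA n : rev (iterA th n) = iterA th n.
Proof. by rewrite /iterA -iterw_rev //; apply: paperfolding_symmetric_rev. Qed.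

Lemma mkseq_fixpt t M : (t <= M)%N -> mkseq (fixpt th) t = take t (iterA th M).
Proof.
move=> le_tM; apply: (@eq_from_nth _ A).
  by rewrite size_mkseq size_takel // ltnW // (leq_ltn_trans le_tM (size_iterA_gt M)).
move=> k; rewrite size_mkseq => lt_kt.
rewrite nth_mkseq // nth_take // /fixpt -/(iterA th k.+1).
have /prefixP[r ->] := prefix_iterA (leq_trans lt_kt le_tM).
by rewrite nth_cat ltnW // size_iterA_gt.
Qed.

Lemma fixwalk_take t M : (t <= M)%N -> fixwalk th t = Sw (take t (iterA th M)).
Proof. by move=> le_tM; rewrite /fixwalk (mkseq_fixpt le_tM). Qed.

Lemma fixwalk1 : fixwalk th 1 = (1, 0).
Proof. by rewrite (fixwalk_take (M := 1)) // /iterA iterwS /= /applyw /= thA SwE big_seq1. Qed.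

Lemma in_lang_walk j n : (0 < n)%N ->
  in_lang th (map (iter j sigma) (mkseq (fixpt th) n)).
Proof.
move=> n_gt0; apply: (@in_lang_infix _ n (iter j sigma A)).
  by rewrite size_map size_mkseq.
rewrite -[[:: _]]/(map (iter j sigma) [:: A]) iterw_map; last exact: symmetric_iter_sigma.
by rewrite (mkseq_fixpt (leqnn n)) map_take prefixW // prefix_take.
Qed.

Lemma in_lang_fixwalkB t t' : (t < t')%N ->
  exists2 w, in_lang th w & Sw w = fixwalk th t' - fixwalk th t.
Proof.
move=> lt_tt'; have le_t' := ltnW (size_iterA_gt t').
exists (drop t (take t' (iterA th t'))).
  apply: (@in_lang_infix _ t' A).
    by rewrite size_drop size_takel // subn_gt0.
  exact: infix_trans (infix_drop _ _) (infix_take _ _).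
rewrite (fixwalk_take (leqnn t')) (fixwalk_take (ltnW lt_tt')).
rewrite -{2}(cat_take_drop t (take t' _)) Sw_cat take_takel; last exact: ltnW.
by rewrite addrC addKr.
Qed.

Lemma in_lang_fixwalk_rot90 t t' : (0 < t + t')%N ->
  exists2 w, in_lang th w & Sw w = fixwalk th t + iter e rot90 (fixwalk th t').
Proof.
(* The factor is a suffix of the palindrome X = theta^K(a), i.e. the reverse of
   a prefix, followed by a prefix of sigma^e(X). *)
move=> tt'_gt0; set K := (t + t')%N; set X := iterA th K.
have lt_KX : (t + t' < size X)%N := size_iterA_gt K.
exists (drop (size X - t) X ++ take t' (map (iter e sigma) X)).
  apply: (@in_lang_infix _ K.+1 A).
    have le_tX : (t <= size X)%N by lia.
    by rewrite size_cat size_drop (subKn le_tX) size_takel ?size_map; lia.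
  by rewrite -/(iterA th K.+1) iterA_S catA infix_catr // infix_drop_take.
rewrite Sw_cat -map_take Sw_map_iter_sigma -(fixwalk_take (M := K)); last exact: leq_addl.
congr (_ + _).
rewrite -Sw_rev rev_drop rev_iterA -/X (fixwalk_take (M := K)); last exact: leq_addr.
by congr (Sw (take _ _)); lia.
Qed.

Hypothesis e_1or3 : (e == 1)%N || (e == 3)%N.
Hypothesis visits_10 : exists s : seq (nat * nat),
  uniq s /\ size s = 2%N /\
  forall j n, (j < 4)%N /\ walk th j n = (1, 0) <-> (j, n) \in s.

Section NoZeroSumFactor.

Hypothesis no_zero : forall w, in_lang th w -> Sw w != 0.

Lemma fixwalk_inj : injective (fixwalk th).
Proof.
move=> t t' E; case: (ltngtP t t') => // lt; have [w wL Sw_eq] := in_lang_fixwalkB lt;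
  by move: (no_zero wL); rewrite Sw_eq E subrr eqxx.
Qed.

Lemma fixwalk_neq_rot90 t v : (0 < t + v)%N -> fixwalk th t != rot90 (fixwalk th v).
Proof.
move=> tv_gt0; apply/eqP => E; case/orP: e_1or3 => /eqP e_val.
- have [w wL] : exists2 w, in_lang th w & Sw w = fixwalk th v + iter e rot90 (fixwalk th t).
    by apply: in_lang_fixwalk_rot90; rewrite addnC.
  by rewrite e_val /= E rot90K subrr => Sw0; move: (no_zero wL); rewrite Sw0 eqxx.
- have [w wL] := in_lang_fixwalk_rot90 tv_gt0.
  by rewrite e_val /= E !rot90K subrr => Sw0; move: (no_zero wL); rewrite Sw0 eqxx.
Qed.

Lemma fixwalk_neq_iter_rot90 J t v : (J == 1)%N || (J == 3)%N -> (0 < t + v)%N ->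
  fixwalk th t != iter J rot90 (fixwalk th v).
Proof.
case/orP => /eqP -> tv_gt0; first exact: fixwalk_neq_rot90.
apply: contra (fixwalk_neq_rot90 (t := v) (v := t) _) => [/eqP E|]; last by rewrite addnC.
by rewrite E /= !rot90K opprK.
Qed.

Lemma fixwalk_returns : exists2 n, (0 < n)%N & fixwalk th n = (-1, 0).
Proof.
have [s [s_uniq [s_size s_visits]]] := visits_10.
have [[j n] jn_s jn_neq] : exists2 v, v \in s & v != (0, 1)%N.
  by apply: exists_neq_uniq; rewrite ?s_size.
have [j_lt4 jn_walk] := (s_visits j n).2 jn_s.
rewrite walk_fixwalk -fixwalk1 in jn_walk.
case: j j_lt4 jn_walk jn_neq {jn_s} => [|[|[|[|j]]]] j_lt4 /= jn_walk jn_neq //.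
- by move: jn_neq; rewrite (fixwalk_inj jn_walk) eqxx.
- by move: (fixwalk_neq_rot90 (t := 1) (v := n) isT); rewrite -jn_walk eqxx.
- have Zn : fixwalk th n = (-1, 0).
    by rewrite -[(-1, 0)]/(- (1, 0) : point) -fixwalk1 -jn_walk rot90K opprK.
  by exists n => //; case: n Zn {jn_walk jn_neq}.
- have := fixwalk_neq_iter_rot90 (J := 3%N) (t := 1) (v := n) isT isT.
  by rewrite -jn_walk eqxx.
Qed.

Lemma fixwalk_winding_rot90 J n : (J == 1)%N || (J == 3)%N ->
  closed_walk (fixwalk th) n -> winding (fixwalk th) n (iter J rot90 (1, 0)) = 0.
Proof.
move=> J_1or3 Z_closed; rewrite -fixwalk1.
apply: (winding_escape Z_closed (W := fun t => iter J rot90 (fixwalk th t.+1))).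
- move=> t; exists (iter J sigma (fixpt th t.+1)).
  by rewrite fixwalkS iter_rot90D iter_rot90_Svec.
- by move=> t t' /= /iter_rot90_inj /fixwalk_inj /succn_inj.
- by move=> t k _ /=; apply: fixwalk_neq_iter_rot90; rewrite ?addnS.
Qed.

Lemma no_zero_sum_factor_absurd : False.
Proof.
have [n n_gt0 Zn] := fixwalk_returns.
have Z_closed := fixwalk_closed Zn.
have off k : (0 < k <= n)%N -> fixwalk th k != 0 /\ fixwalk th k != (0, 1).
  move=> /andP[k_gt0 _]; split.
  - by rewrite -(fixwalk0 th); apply: contraTneq k_gt0 => /fixwalk_inj ->.
  - by rewrite -[(0, 1)]/(rot90 (1, 0)) -fixwalk1; apply: fixwalk_neq_rot90; rewrite addn1.
have := winding_origin Z_closed (fixwalk0 th) fixwalk1 Zn off.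
rewrite -[(0, -1)]/(iter 3 rot90 (1, 0)) -[(0, 1)]/(iter 1 rot90 (1, 0)).
by rewrite !fixwalk_winding_rot90.
Qed.

End NoZeroSumFactor.

Lemma zero_sum_factor : exists2 w, in_lang th w & Sw w = 0.
Proof.
apply: NNPP => none; apply: no_zero_sum_factor_absurd => w wL.
by apply/eqP => Sw0; apply: none; exists w.
Qed.

End FixedPoint.

Lemma paperfolding_second_letter th u : paperfolding th -> th A = A :: u -> u <> [::] ->
  exists e rest, ((e == 1) || (e == 3))%N /\ th A = [:: A, iter e sigma A & rest].
Proof.
move=> [_ alternate] thA; case: u thA => [//|x rest] thA _.
have := alternate 0%N; rewrite thA /= => /(_ isT).
by case: x thA => // thA _; [exists 1%N | exists 3%N]; exists rest.
Qed.

Theorem proposition11 (th : morph) :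
  perfect th -> symmetric_pf th ->
  forall p : int * int, exists w : seq letter, in_lang th w /\ Sw w = p.
Proof.
move=> [th_pf [[u [thA u_neq0]] visits]] th_sym p.
have [e [rest [e_1or3 thA']]] := paperfolding_second_letter th_pf thA u_neq0.
have [->|p_neq0] := eqVneq p 0.
  by have [w wL Sw0] := zero_sum_factor th_pf th_sym thA' e_1or3 (visits (1, 0)); exists w.
have [[|[j n] s] [_ [s_size s_visits]]] := visits p; first by rewrite (negPf p_neq0) in s_size.
have [_ jn_p] := (s_visits j n).2 (mem_head _ _).
exists (map (iter j sigma) (mkseq (fixpt th) n)); split=> //.
apply: (in_lang_walk th_pf th_sym thA'); case: n jn_p {s_visits s_size} => // walk0.
by move: p_neq0; rewrite -walk0 walk_fixwalk fixwalk0 iter_rot90_0 eqxx.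
Qed.
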